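(* Let $D\ge 1$. The underlying block design $\mathcal{F}$ of any $(T,N,D)$-tropical code is $(D-1)$-uniquely-disjunct.
   Context: Tropical arithmetic on $\mathbb{R}\cup\{\infty\}$: $x\oplus y=\min(x,y)$, $x\odot y=x+y$, with $x\oplus\infty=x$ and $x\odot\infty=\infty$. For a matrix $S$ with $T$ rows and $N$ columns and a column vector $\mathbf{x}$ of length $N$, $S\odot\mathbf{x}$ is the vector whose $t$-th entry is $\min_{j}(S_{tj}+x_j)$. A $(T,N,D)$-tropical code is a matrix $S\in(\{0\}\cup\mathbb{N}\cup\{\infty\})^{T\times N}$ such that for any two distinct vectors $\mathbf{x},\mathbf{y}\in(\{0\}\cup\mathbb{N}\cup\{\infty\})^{N}$, each having at most $D$ finite entries, $S\odot\mathbf{x}\ne S\odot\mathbf{y}$. The underlying block design of $S$ is the multiset $\mathcal{F}=\{\{t\in[T]: S_{tj}<\infty\}: j\in[N]\}$ (one block per column, so $|\mathcal{F}|=N$); ''distinct blocks'' means blocks coming from distinct columns (they may coincide as sets). $\mathcal{F}$ is $m$-disjunct if $|Z\setminus(B_1\cup\dots\cup B_m)|\ge 1$ for all distinct blocks $Z,B_1,\dots,B_m\in\mathcal{F}$. $\mathcal{F}$ is $m$-uniquely-disjunct if it is $m$-disjunct and, for every $t\in[T]$ and all distinct blocks $B_1,\dots,B_m\in\mathcal{F}$, at most one block $Z\in\mathcal{F}$ (other than the $B_i$, counted by column) satisfies $Z\setminus(B_1\cup\dots\cup B_m)=\{t\}$. *)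

(* Tropical semiring on N ∪ {∞} modelled as [option nat],
   with [None] = ∞ and [Some n] = n. *)
From mathcomp Require Import all_boot.
Set Implicit Arguments. Unset Strict Implicit. Unset Printing Implicit Defensive.

Definition tadd (x y : option nat) : option nat :=
  match x, y with
  | None, _ => y
  | _, None => x
  | Some a, Some b => Some (minn a b)
  end.

Definition tmul (x y : option nat) : option nat :=
  match x, y with
  | Some a, Some b => Some (a + b)
  | _, _ => None
  end.

Definition tmv (T N : nat) (S : 'I_T -> 'I_N -> option nat)
    (x : {ffun 'I_N -> option nat}) : {ffun 'I_T -> option nat} :=
  [ffun t => foldr (fun j acc => tadd (tmul (S t j) (x j)) acc) None (enum 'I_N)].

Definition fin_supp (N : nat) (x : {ffun 'I_N -> option nat}) : {set 'I_N} :=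
  [set j | x j != None].

Definition tropical_code (T N D : nat) (S : 'I_T -> 'I_N -> option nat) : Prop :=
  forall x y : {ffun 'I_N -> option nat},
    #|fin_supp x| <= D -> #|fin_supp y| <= D -> x != y -> tmv S x != tmv S y.

Definition block (T N : nat) (S : 'I_T -> 'I_N -> option nat) (j : 'I_N) : {set 'I_T} :=
  [set t | S t j != None].

Definition blocks_union (T N : nat) (S : 'I_T -> 'I_N -> option nat) (Bs : {set 'I_N})
  : {set 'I_T} := \bigcup_(j in Bs) block S j.

Definition disjunct (T N : nat) (S : 'I_T -> 'I_N -> option nat) (m : nat) : Prop :=
  forall (z : 'I_N) (Bs : {set 'I_N}), #|Bs| = m -> z \notin Bs ->
    1 <= #|block S z :\: blocks_union S Bs|.

Definition uniquely_disjunct (T N : nat) (S : 'I_T -> 'I_N -> option nat) (m : nat)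
  : Prop :=
  disjunct S m /\
  forall (t : 'I_T) (Bs : {set 'I_N}), #|Bs| = m ->
    forall z z' : 'I_N, z \notin Bs -> z' \notin Bs ->
      block S z :\: blocks_union S Bs = [set t] ->
      block S z' :\: blocks_union S Bs = [set t] ->
      z = z'.

(* If the columns B_1..B_{D-1} cover the block of a further column z, then
   the input with 0 on the B_i and a value larger than every finite entry of
   S on z has the same tropical image as the input with 0 on the B_i alone:
   on every row of the block of z the 0-columns already give a smaller
   entry.  If two columns z, z' have the same single private row t, with
   entries s = S t z and s' = S t z', put 0 on the B_i and M + s' on z
   (resp. M + s on z'), M a bound on the entries: both inputs give
   M + s + s' on row t and agree with the B_i alone on every other row. *)
From mathcomp Require Import all_boot.
From HB Require Import structures.
Set Implicit Arguments. Unset Strict Implicit. Unset Printing Implicit Defensive.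

Lemma taddA : associative tadd.
Proof. by case=> [a|] [b|] [c|] //=; rewrite minnA. Qed.

Lemma taddC : commutative tadd.
Proof. by case=> [a|] [b|] //=; rewrite minnC. Qed.

Lemma tadd0 : left_id None tadd.
Proof. by case. Qed.

HB.instance Definition _ :=
  Monoid.isComLaw.Build (option nat) None tadd taddA taddC tadd0.

Lemma tmulr0 (s : option nat) : tmul s None = None.
Proof. by case: s. Qed.

Lemma tmulr1 (s : option nat) : tmul s (Some 0) = s.
Proof. by case: s => //= a; rewrite addn0. Qed.

Lemma tmvE T N (S : 'I_T -> 'I_N -> option nat) x t :
  tmv S x t = \big[tadd/None]_(j : 'I_N) tmul (S t j) (x j).
Proof. by rewrite ffunE -big_enum unlock /=; elim: (enum 'I_N) => //= a s ->. Qed.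

Definition test_input N (Bs : {set 'I_N}) (z : 'I_N) (v : option nat)
  : {ffun 'I_N -> option nat} :=
  [ffun j => if j \in Bs then Some 0 else if j == z then v else None].

Lemma fin_supp_test_input N (Bs : {set 'I_N}) z v : z \notin Bs ->
  fin_supp (test_input Bs z v) = if v is Some _ then z |: Bs else Bs.
Proof.
move=> zB; apply/setP => j; rewrite !inE ffunE.
case: v => [a|]; case: (eqVneq j z) => [->|nz] /=; rewrite ?(negbTE zB) //.
- by rewrite setU11.
- by rewrite in_setU1 (negbTE nz); case: (j \in Bs).
- by case: (j \in Bs).
Qed.

Lemma test_input_inj N (Bs : {set 'I_N}) z z' v v' :
  z \notin Bs -> v != None -> (z != z') || (v != v') ->
  test_input Bs z v != test_input Bs z' v'.
Proof.
move=> zB vN neq; apply/eqP => /ffunP/(_ z); rewrite !ffunE (negbTE zB) eqxx.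
case: (eqVneq z z') neq => [_ /= /eqP // | _ _ E].
by rewrite E in vN.
Qed.

Lemma card_setU1_le (N D : nat) (Bs : {set 'I_N}) z :
  1 <= D -> #|Bs| = D - 1 -> #|z |: Bs| <= D.
Proof.
by move=> D1 cB; rewrite cardsU1 cB; case: (z \in Bs); rewrite /= ?leq_subr ?subnKC.
Qed.

Section TestInputs.
Variables (T N : nat) (S : 'I_T -> 'I_N -> option nat).

Definition max_entry : nat := \max_(t : 'I_T) \max_(j : 'I_N) odflt 0 (S t j).

(* Row [t] of [S ⊙ x] for the input [x] that is 0 on [Bs] and ∞ elsewhere. *)
Definition colsum (Bs : {set 'I_N}) (t : 'I_T) : option nat :=
  \big[tadd/None]_(j in Bs) S t j.

Lemma entry_le_max t j s : S t j = Some s -> s <= max_entry.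
Proof.
move=> E; apply: leq_trans (leq_bigmax t).
by apply: leq_trans (leq_bigmax j); rewrite E.
Qed.

Lemma colsum_le_max Bs t u : colsum Bs t = Some u -> u <= max_entry.
Proof.
elim/big_ind: (colsum Bs t) u => [//| [a|] [b|] Ha Hb u //= | j _ u].
- by case=> <-; rewrite geq_min Ha.
- exact: Ha.
- exact: Hb.
exact: entry_le_max.
Qed.

Lemma colsum_finite Bs t : t \in blocks_union S Bs -> colsum Bs t != None.
Proof.
case/bigcupP => j jB; rewrite inE /colsum (bigD1 j) //=.
by case: (S t j) => // a _; case: (\big[tadd/None]_(i in Bs | i != j) S t i).
Qed.

Lemma colsum_out Bs t : t \notin blocks_union S Bs -> colsum Bs t = None.
Proof.
move=> tU; rewrite /colsum big1 // => j jB.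
by apply/eqP; apply: contraNT tU => Sj; apply/bigcupP; exists j; rewrite ?inE.
Qed.

Lemma tmv_test_input (Bs : {set 'I_N}) z v t : z \notin Bs ->
  tmv S (test_input Bs z v) t = tadd (tmul (S t z) v) (colsum Bs t).
Proof.
move=> zB; rewrite tmvE (bigD1 z) //= ffunE (negbTE zB) eqxx; congr tadd.
rewrite /colsum big_mkcond [RHS]big_mkcond; apply: eq_bigr => j _ /=.
rewrite ffunE; case: (boolP (j \in Bs)) => jB; first by rewrite (memPn zB j jB) tmulr1.
by case: eqVneq; rewrite ?tmulr0.
Qed.

Lemma tadd_colsum_absorb (Bs : {set 'I_N}) z t v : max_entry <= v ->
  (t \in block S z -> t \in blocks_union S Bs) ->
  tadd (tmul (S t z) (Some v)) (colsum Bs t) = colsum Bs t.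
Proof.
move=> Mv zU; case E: (S t z) => [s|] //=.
have := colsum_finite (zU _); rewrite inE E => /(_ isT).
case F: (colsum Bs t) => [u|] //= _; congr Some; apply/minn_idPr.
by rewrite (leq_trans (colsum_le_max F)) // (leq_trans Mv) ?leq_addl.
Qed.

Variable D : nat.
Hypotheses (D1 : 1 <= D) (code : tropical_code D S).

Lemma tropical_code_disjunct : disjunct S (D - 1).
Proof.
move=> z Bs cB zB; rewrite card_gt0; apply/negP => /eqP covered.
have zU t : t \in block S z -> t \in blocks_union S Bs.
  by move=> tz; apply: negbFE; rewrite -(in_set0 t) -covered inE tz andbT.
have := code (x := test_input Bs z None) (y := test_input Bs z (Some max_entry)).
rewrite !fin_supp_test_input // cB leq_subr card_setU1_le // eq_sym.
rewrite test_input_inj ?eqxx ?orbT // => /(_ isT isT isT) /eqP; apply.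
apply/ffunP => t; rewrite !tmv_test_input // tmulr0 tadd0.
by rewrite (tadd_colsum_absorb (leqnn _) (@zU t)).
Qed.

Lemma private_row_set1 (Bs : {set 'I_N}) y t0 :
  block S y :\: blocks_union S Bs = [set t0] ->
  [/\ t0 \notin blocks_union S Bs, exists s, S t0 y = Some s &
      forall t, t != t0 -> t \in block S y -> t \in blocks_union S Bs].
Proof.
move=> Ey; have := set11 t0; rewrite -Ey inE => /andP[t0U t0y].
split=> [//||t nt ty].
  by move: t0y; rewrite inE; case: (S t0 y) => // s; exists s.
by apply: contraNT nt => tU; rewrite -in_set1 -Ey inE tU.
Qed.

Lemma tropical_code_private_unique t0 (Bs : {set 'I_N}) z z' :
  #|Bs| = D - 1 -> z \notin Bs -> z' \notin Bs ->
  block S z :\: blocks_union S Bs = [set t0] ->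
  block S z' :\: blocks_union S Bs = [set t0] -> z = z'.
Proof.
move=> cB zB z'B /private_row_set1[t0U [s Sz] zU] /private_row_set1[_ [s' Sz'] z'U].
case: (eqVneq z z') => // nz.
have := code (x := test_input Bs z (Some (max_entry + s')))
             (y := test_input Bs z' (Some (max_entry + s))).
rewrite !fin_supp_test_input // !card_setU1_le // test_input_inj ?nz //.
move=> /(_ isT isT isT) /eqP; case; apply/ffunP => t.
rewrite !tmv_test_input //; case: (eqVneq t t0) => [->|nt].
  by rewrite colsum_out // Sz Sz' /= addnCA (addnCA s') (addnC s).
by rewrite (tadd_colsum_absorb _ (zU t nt)) ?(tadd_colsum_absorb _ (z'U t nt))
  ?leq_addr.
Qed.

End TestInputs.

Theorem mainTheorem10 (T N D : nat) (S : 'I_T -> 'I_N -> option nat) :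
  1 <= D -> tropical_code D S -> uniquely_disjunct S (D - 1).
Proof.
move=> D1 code; split; first exact: tropical_code_disjunct.
by move=> t Bs cB z z'; apply: (tropical_code_private_unique D1 code).
Qed.
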